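(* Every T-stationary point $(\bar x,\bar y)$ of the relaxation (R), regarded as an MPOC, is degenerate, i.e. at least one of the nondegeneracy conditions ND1–ND4 fails at $(\bar x,\bar y)$.
   Context: Let $f\in C^2(\mathbb{R}^n,\mathbb{R})$ and $s\in\{0,1,\dots,n-1\}$. Relaxation (R): minimize $f(x)$ over $(x,y)\in\mathbb{R}^{2n}$ s.t. $\sum_{i=1}^n y_i\ge n-s$, $y_i\le 1$, $x_iy_i=0$, $y_i\ge0$, $i=1,\dots,n$. This is an MPOC (in variables $z=(x,y)$) with no equality constraints, inequality constraints $g_0(z)=\sum_i y_i-(n-s)\ge0$ and $g_i(z)=1-y_i\ge0$, and orthogonality type constraints $F_{1,i}(z)F_{2,i}(z)=0$, $F_{2,i}(z)\ge0$ with $F_{1,i}(z)=x_i$, $F_{2,i}(z)=y_i$, $i=1,\dots,n$. General MPOC definitions (for $\min f$ s.t. $h_i=0$, $g_j\ge0$, $F_{1,m}F_{2,m}=0$, $F_{2,m}\ge0$): at a feasible $\bar z$, $J_0=\{j\mid g_j(\bar z)=0\}$, $a_{00}=\{m\mid F_{1,m}(\bar z)=0=F_{2,m}(\bar z)\}$, $a_{01}=\{m\mid F_{1,m}(\bar z)=0,F_{2,m}(\bar z)>0\}$, $a_{10}=\{m\mid F_{1,m}(\bar z)\ne0,F_{2,m}(\bar z)=0\}$. LICQ: $Dh_i$, $Dg_j$ ($j\in J_0$), $DF_{1,m}$ ($m\in a_{01}\cup a_{00}$), $DF_{2,m}$ ($m\in a_{10}\cup a_{00}$) at $\bar z$ linearly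 independent. T-stationary: there exist multipliers $\bar\lambda_i,\bar\mu_j$ ($j\in J_0$), $\bar\sigma_{1,m}$ ($a_{01}$), $\bar\sigma_{2,m}$ ($a_{10}$), $\bar\varrho_{1,m},\bar\varrho_{2,m}$ ($a_{00}$) with $Df=\sum\bar\lambda_iDh_i+\sum_{J_0}\bar\mu_jDg_j+\sum_{a_{01}}\bar\sigma_{1,m}DF_{1,m}+\sum_{a_{10}}\bar\sigma_{2,m}DF_{2,m}+\sum_{a_{00}}(\bar\varrho_{1,m}DF_{1,m}+\bar\varrho_{2,m}DF_{2,m})$ at $\bar z$, $\bar\mu_j\ge0$, and $\bar\varrho_{1,m}=0$ or $\bar\varrho_{2,m}\le0$ for $m\in a_{00}$. Lagrangian $L=f-\sum\bar\lambda_ih_i-\sum_{J_0}\bar\mu_jg_j-\sum_{a_{01}}\bar\sigma_{1,m}F_{1,m}-\sum_{a_{10}}\bar\sigma_{2,m}F_{2,m}-\sum_{a_{00}}(\bar\varrho_{1,m}F_{1,m}+\bar\varrho_{2,m}F_{2,m})$; tangent space $T=\{\xi\mid Dh_i(\bar z)\xi=0,\ Dg_j(\bar z)\xi=0\ (j\in J_0),\ DF_{1,m}(\bar z)\xi=0\ (m\in a_{01}\cup a_{00}),\ DF_{2,m}(\bar z)\xi=0\ (m\in a_{10}\cup a_{00})\}$. Nondegeneracy of a T-stationary point: ND1 LICQ holds; ND2 $\bar\mu_j>0$ for all $j\in J_0$; ND3 $\bar\varrho_{1,m}\ne0$ and $\bar\varrho_{2,m}<0$ for all $m\in a_{00}$;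 ND4 $D^2L(\bar z)$ restricted to $T$ is nonsingular. A T-stationary point is degenerate if it is not nondegenerate. *)

From HB Require Import structures.
From mathcomp Require Import all_boot all_order all_algebra.
From mathcomp Require Import all_classical all_reals all_analysis.
Set Implicit Arguments. Unset Strict Implicit. Unset Printing Implicit Defensive.
Import Order.TTheory GRing.Theory Num.Theory.
Import numFieldNormedType.Exports.
Local Open Scope ring_scope.

Section MPOC.
Variable R : realType.

Definition evec (N : nat) (j : 'I_N) : 'rV[R]_N := delta_mx 0 j.

Definition partial (N : nat) (j : 'I_N) (phi : 'rV[R]_N -> R) (z : 'rV[R]_N) : R :=
  derive phi z (evec j).

Definition grad (N : nat) (phi : 'rV[R]_N -> R) (z : 'rV[R]_N) : 'rV[R]_N :=
  \row_j partial j phi z.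
Definition hess (N : nat) (phi : 'rV[R]_N -> R) (z : 'rV[R]_N) : 'M[R]_N :=
  \matrix_(i, j) partial j (partial i phi) z.

Definition dotv (N : nat) (u v : 'rV[R]_N) : R := \sum_k u 0 k * v 0 k.

Definition C2 (N : nat) (phi : 'rV[R]_N -> R) : Prop :=
  continuous phi /\
  (forall (i : 'I_N) z, derivable phi z (evec i)) /\
  (forall i : 'I_N, continuous (partial i phi)) /\
  (forall (i j : 'I_N) z, derivable (partial i phi) z (evec j)) /\
  (forall i j : 'I_N, continuous (partial j (partial i phi))).

(** A general MPOC on R^N:  min obj  s.t. h_i = 0 (i<p), g_j >= 0 (j<q),
    F1_m * F2_m = 0, F2_m >= 0 (m<k). *)
Record mpoc (N : nat) := MPOC {
  np : nat; nq : nat; nk : nat;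
  obj : 'rV[R]_N -> R;
  hc : 'I_np -> 'rV[R]_N -> R;
  gc : 'I_nq -> 'rV[R]_N -> R;
  F1 : 'I_nk -> 'rV[R]_N -> R;
  F2 : 'I_nk -> 'rV[R]_N -> R }.
Arguments np {N} m.
Arguments nq {N} m.
Arguments nk {N} m.
Arguments obj {N} m _.
Arguments hc {N} m _ _.
Arguments gc {N} m _ _.
Arguments F1 {N} m _ _.
Arguments F2 {N} m _ _.

Variable N : nat.
Variable P : mpoc N.

Definition feasible (z : 'rV[R]_N) : Prop :=
  (forall i, hc P i z = 0) /\ (forall j, 0 <= gc P j z) /\
  (forall m, F1 P m z * F2 P m z = 0 /\ 0 <= F2 P m z).

Definition J0 (z : 'rV[R]_N) (j : 'I_(nq P)) : bool := gc P j z == 0.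
Definition a00 (z : 'rV[R]_N) (m : 'I_(nk P)) : bool :=
  (F1 P m z == 0) && (F2 P m z == 0).
Definition a01 (z : 'rV[R]_N) (m : 'I_(nk P)) : bool :=
  (F1 P m z == 0) && (0 < F2 P m z).
Definition a10 (z : 'rV[R]_N) (m : 'I_(nk P)) : bool :=
  (F1 P m z != 0) && (F2 P m z == 0).

Definition LICQ (z : 'rV[R]_N) : Prop :=
  forall (a : 'I_(np P) -> R) (b : 'I_(nq P) -> R) (c d : 'I_(nk P) -> R),
    \sum_i a i *: grad (hc P i) z
    + \sum_(j | J0 z j) b j *: grad (gc P j) z
    + \sum_(m | a01 z m || a00 z m) c m *: grad (F1 P m) z
    + \sum_(m | a10 z m || a00 z m) d m *: grad (F2 P m) z = 0 ->
    (forall i, a i = 0) /\ (forall j, J0 z j -> b j = 0) /\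
    (forall m, a01 z m || a00 z m -> c m = 0) /\
    (forall m, a10 z m || a00 z m -> d m = 0).

(** Multipliers (only the values on the relevant index sets matter). *)
Record mult := Mult {
  lam : 'I_(np P) -> R;
  mu : 'I_(nq P) -> R;
  sig1 : 'I_(nk P) -> R;
  sig2 : 'I_(nk P) -> R;
  rho1 : 'I_(nk P) -> R;
  rho2 : 'I_(nk P) -> R }.

Definition Tstat_with (z : 'rV[R]_N) (M : mult) : Prop :=
  feasible z /\
  grad (obj P) z =
    \sum_i lam M i *: grad (hc P i) z
    + \sum_(j | J0 z j) mu M j *: grad (gc P j) z
    + \sum_(m | a01 z m) sig1 M m *: grad (F1 P m) z
    + \sum_(m | a10 z m) sig2 M m *: grad (F2 P m) z
    + \sum_(m | a00 z m) (rho1 M m *: grad (F1 P m) z + rho2 M m *: grad (F2 P m) z) /\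
  (forall j, J0 z j -> 0 <= mu M j) /\
  (forall m, a00 z m -> rho1 M m = 0 \/ rho2 M m <= 0).

Definition T_stationary (z : 'rV[R]_N) : Prop := exists M, Tstat_with z M.

Definition Lagrangian (zbar : 'rV[R]_N) (M : mult) (w : 'rV[R]_N) : R :=
  obj P w
  - \sum_i lam M i * hc P i w
  - \sum_(j | J0 zbar j) mu M j * gc P j w
  - \sum_(m | a01 zbar m) sig1 M m * F1 P m w
  - \sum_(m | a10 zbar m) sig2 M m * F2 P m w
  - \sum_(m | a00 zbar m) (rho1 M m * F1 P m w + rho2 M m * F2 P m w).

Definition tangent (zbar : 'rV[R]_N) (xi : 'rV[R]_N) : Prop :=
  (forall i, dotv (grad (hc P i) zbar) xi = 0) /\
  (forall j, J0 zbar j -> dotv (grad (gc P j) zbar) xi = 0) /\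
  (forall m, a01 zbar m || a00 zbar m -> dotv (grad (F1 P m) zbar) xi = 0) /\
  (forall m, a10 zbar m || a00 zbar m -> dotv (grad (F2 P m) zbar) xi = 0).

Definition ND1 (z : 'rV[R]_N) : Prop := LICQ z.
Definition ND2 (z : 'rV[R]_N) (M : mult) : Prop := forall j, J0 z j -> 0 < mu M j.
Definition ND3 (z : 'rV[R]_N) (M : mult) : Prop :=
  forall m, a00 z m -> rho1 M m != 0 /\ rho2 M m < 0.
Definition ND4 (z : 'rV[R]_N) (M : mult) : Prop :=
  forall xi, tangent z xi ->
    (forall eta, tangent z eta -> dotv (xi *m hess (Lagrangian z M) z) eta = 0) ->
    xi = 0.

Definition nondegenerate (z : 'rV[R]_N) : Prop :=
  exists M, Tstat_with z M /\ ND1 z /\ ND2 z M /\ ND3 z M /\ ND4 z M.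

Definition degenerate (z : 'rV[R]_N) : Prop := T_stationary z /\ ~ nondegenerate z.

End MPOC.

(** The relaxation (R) in the variables z = (x, y) in R^(n+n):
    x = lsubmx z, y = rsubmx z. *)
Section Relaxation.
Variable R : realType.
Variables n s : nat.
Variable f : 'rV[R]_n -> R.

Definition relax_g (j : 'I_n.+1) (z : 'rV[R]_(n + n)) : R :=
  match unlift ord0 j with
  | None => \sum_(i < n) rsubmx z 0 i - (n - s)%:R
  | Some i => 1 - rsubmx z 0 i
  end.

Definition relaxation : mpoc R (n + n) :=
  @MPOC R (n + n) 0 n.+1 n
    (fun z => f (lsubmx z))
    (fun _ _ => 0)
    relax_g
    (fun m z => lsubmx z 0 m)
    (fun m z => rsubmx z 0 m).
End Relaxation.

From HB Require Import structures.
From mathcomp Require Import all_boot all_order all_algebra.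
From mathcomp Require Import all_classical all_reals all_analysis.
From mathcomp Require Import lra.
Import Order.TTheory GRing.Theory Num.Theory.
Import numFieldNormedType.Exports.
Local Open Scope ring_scope.
Set Implicit Arguments. Unset Strict Implicit.

(* All constraints of (R) are affine and the objective depends on x only, so
   along every y-direction the Lagrangian is affine and its Hessian row
   vanishes.  At a nondegenerate T-stationary point the y-components of the
   stationarity equation then leave no room.  If some 0 < y_i < 1, either
   g_0 is active and its multiplier must vanish (against ND2), or e_{y_i} is a
   tangent vector in the kernel of D^2 L (against ND4).  Otherwise y is
   binary: if g_0 is active, Dg_0 = sum_i e_{y_i} is the sum of the active
   -Dg_i (y_i = 1) and DF_{2,i} (y_i = 0), against LICQ; if g_0 is inactive,
   feasibility gives some y_i = 1, whose multiplier must vanish (against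
   ND2). *)

Section AffineCalculus.
Variables (R : realType) (N : nat).
Implicit Types (phi psi : 'rV[R]_N -> R) (u v w : 'rV[R]_N) (c : R).

Lemma evecE (p q : 'I_N) : evec R p 0 q = (p == q)%:R.
Proof. by rewrite /evec mxE eqxx eq_sym. Qed.

Lemma evec_neq0 (p : 'I_N) : evec R p != 0.
Proof. by apply/eqP => /rowP/(_ p); rewrite evecE eqxx mxE => /eqP; rewrite oner_eq0. Qed.

Lemma dotvDr u v w : dotv u (v + w) = dotv u v + dotv u w.
Proof. by rewrite /dotv -big_split; apply: eq_bigr => k _; rewrite mxE mulrDr. Qed.

Lemma dotvZr u v c : dotv u (c *: v) = c * dotv u v.
Proof. by rewrite /dotv mulr_sumr; apply: eq_bigr => k _; rewrite mxE mulrCA. Qed.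

Lemma dotv0l w : dotv 0 w = 0.
Proof. by rewrite /dotv big1 // => k _; rewrite mxE mul0r. Qed.

Lemma dotvNl u w : dotv (- u) w = - dotv u w.
Proof. by rewrite /dotv -sumrN; apply: eq_bigr => k _; rewrite mxE mulNr. Qed.

Lemma dotv_suml (I : finType) (Q : pred I) (F : I -> 'rV[R]_N) w :
  dotv (\sum_(i | Q i) F i) w = \sum_(i | Q i) dotv (F i) w.
Proof. by rewrite /dotv exchange_big; apply: eq_bigr => k _; rewrite summxE mulr_suml. Qed.

Lemma dotv_evecr u (p : 'I_N) : dotv u (evec R p) = u 0 p.
Proof.
rewrite /dotv (bigD1 p) //= evecE eqxx mulr1 big1 ?addr0 // => k kp.
by rewrite evecE eq_sym (negbTE kp) mulr0.
Qed.

Lemma dotv_evecl u (p : 'I_N) : dotv (evec R p) u = u 0 p.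
Proof.
rewrite /dotv (bigD1 p) //= evecE eqxx mul1r big1 ?addr0 // => k kp.
by rewrite evecE eq_sym (negbTE kp) mul0r.
Qed.

Lemma sum_evec_coord (I : finType) (h : I -> 'I_N) (Q : pred I) (a : I -> R) i :
  injective h -> (\sum_(m | Q m) a m *: evec R (h m)) 0 (h i) = if Q i then a i else 0.
Proof.
move=> h_inj; rewrite summxE; case: ifP => Qi.
  rewrite (bigD1 i) //= mxE evecE eqxx mulr1 big1 ?addr0 // => m /andP[_ mi].
  by rewrite mxE evecE (inj_eq h_inj) (negbTE mi) mulr0.
rewrite big1 // => m Qm; rewrite mxE evecE (inj_eq h_inj).
by case: eqP => [mi | _]; [rewrite -mi Qm in Qi | rewrite mulr0].
Qed.

Lemma sum_evec_coord_out (I : finType) (h : I -> 'I_N) (Q : pred I) (a : I -> R) k :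
  (forall m, h m != k) -> (\sum_(m | Q m) a m *: evec R (h m)) 0 k = 0.
Proof. by move=> hk; rewrite summxE big1 // => m _; rewrite mxE evecE (negbTE (hk m)) mulr0. Qed.

Definition affine phi := exists u b, forall w, phi w = dotv u w + b.

Definition affine_along phi v := exists c, forall w t, phi (w + t *: v) = phi w + t * c.

Lemma derive_slope phi v c w :
  (forall w t, phi (w + t *: v) = phi w + t * c) -> derive phi w v = c.
Proof.
move=> phi_v; apply: cvg_lim; first exact: norm_hausdorff.
apply: cvg_near_cst; near=> t.
have t_neq0 : t != 0 by near: t; exact: nbhs_dnbhs_neq.
rewrite /= [t *: v + w]addrC phi_v addrC addKr.
by rewrite -[t^-1 *: _]/(t^-1 * _) mulrA mulVf ?mul1r.
Unshelve. all: end_near.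
Qed.

Lemma affine_alongB phi psi v :
  affine_along phi v -> affine_along psi v -> affine_along (fun w => phi w - psi w) v.
Proof. by move=> [c Hphi] [d Hpsi]; exists (c - d) => w t; rewrite Hphi Hpsi mulrBr; lra. Qed.

Lemma affine_alongD phi psi v :
  affine_along phi v -> affine_along psi v -> affine_along (fun w => phi w + psi w) v.
Proof. by move=> [c Hphi] [d Hpsi]; exists (c + d) => w t; rewrite Hphi Hpsi mulrDr; lra. Qed.

Lemma affine_alongMl phi v k : affine_along phi v -> affine_along (fun w => k * phi w) v.
Proof. by move=> [c Hphi]; exists (k * c) => w t; rewrite Hphi mulrDr mulrCA. Qed.

Lemma affine_along_sum (I : finType) (Q : pred I) (F : I -> 'rV[R]_N -> R) v :
  (forall i, Q i -> affine_along (F i) v) ->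
  affine_along (fun w => \sum_(i | Q i) F i w) v.
Proof.
move=> HF.
have /choice [c Hc] : forall i, exists c, Q i -> forall w t, F i (w + t *: v) = F i w + t * c.
  by move=> i; case: (boolP (Q i)) => [/HF [c Hc] | _]; [exists c | exists 0].
exists (\sum_(i | Q i) c i) => w t.
rewrite (eq_bigr (fun i => F i w + t * c i)) => [|i Qi]; last exact: Hc.
by rewrite big_split mulr_sumr.
Qed.

Lemma affine_affine_along phi v : affine phi -> affine_along phi v.
Proof. by move=> [u [b phiE]]; exists (dotv u v) => w t; rewrite !phiE dotvDr dotvZr; lra. Qed.

Lemma grad_affine phi u b z : (forall w, phi w = dotv u w + b) -> grad phi z = u.
Proof.
move=> phiE; apply/rowP => j; rewrite mxE /partial -dotv_evecr.
by apply: derive_slope => w t; rewrite !phiE dotvDr dotvZr; lra.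
Qed.

Lemma hess_row_affine_along phi (j : 'I_N) z :
  affine_along phi (evec R j) -> evec R j *m hess phi z = 0.
Proof.
move=> [c phi_j]; rewrite /evec -rowE; apply/rowP => k; rewrite !mxE.
have -> : partial j phi = fun _ => c by apply: funext => w; exact: derive_slope.
by apply: derive_slope => w t; rewrite mulr0 addr0.
Qed.

End AffineCalculus.

Section Relaxation.
Variables (R : realType) (n s : nat) (f : 'rV[R]_n -> R).
Local Notation P := (relaxation s f).
Local Notation xvec i := (evec R (lshift n i)).
Local Notation yvec i := (evec R (rshift n i)).
Implicit Types (z w : 'rV[R]_(n + n)) (M : mult P).

Lemma g0E w : @gc _ _ P ord0 w = \sum_(i < n) w 0 (rshift n i) - (n - s)%:R.
Proof. by rewrite /= /relax_g unlift_none; congr (_ - _); apply: eq_bigr => i _; rewrite mxE. Qed.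

Lemma gSE i w : @gc _ _ P (lift ord0 i) w = 1 - w 0 (rshift n i).
Proof. by rewrite /= /relax_g liftK mxE. Qed.

Lemma F1E m w : @F1 _ _ P m w = w 0 (lshift n m).
Proof. by rewrite /= mxE. Qed.

Lemma F2E m w : @F2 _ _ P m w = w 0 (rshift n m).
Proof. by rewrite /= mxE. Qed.

Lemma g0_affineE w : @gc _ _ P ord0 w = dotv (\sum_(i < n) yvec i) w + - (n - s)%:R.
Proof. by rewrite g0E dotv_suml; congr (_ - _); apply: eq_bigr => i _; rewrite dotv_evecl. Qed.

Lemma gS_affineE i w : @gc _ _ P (lift ord0 i) w = dotv (- yvec i) w + 1.
Proof. by rewrite gSE dotvNl dotv_evecl addrC. Qed.

Lemma F1_affineE m w : @F1 _ _ P m w = dotv (xvec m) w + 0.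
Proof. by rewrite F1E dotv_evecl addr0. Qed.

Lemma F2_affineE m w : @F2 _ _ P m w = dotv (yvec m) w + 0.
Proof. by rewrite F2E dotv_evecl addr0. Qed.

Lemma grad_g0 z : grad (@gc _ _ P ord0) z = \sum_(i < n) yvec i.
Proof. exact: grad_affine g0_affineE. Qed.

Lemma grad_gS i z : grad (@gc _ _ P (lift ord0 i)) z = - yvec i.
Proof. exact: grad_affine (gS_affineE i). Qed.

Lemma grad_F1 m z : grad (@F1 _ _ P m) z = xvec m.
Proof. exact: grad_affine (F1_affineE m). Qed.

Lemma grad_F2 m z : grad (@F2 _ _ P m) z = yvec m.
Proof. exact: grad_affine (F2_affineE m). Qed.

Lemma affine_gc j : affine (@gc _ _ P j).
Proof.
case: (unliftP ord0 j) => [i -> | ->].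
  by exists (- yvec i), 1; exact: gS_affineE.
by exists (\sum_(i < n) yvec i), (- (n - s)%:R); exact: g0_affineE.
Qed.

Lemma obj_shift_y w t i : obj P (w + t *: yvec i) = obj P w.
Proof. by congr f; apply/rowP => k; rewrite !mxE eq_lrshift andbF mulr0 addr0. Qed.

Lemma affine_along_obj i : affine_along (obj P) (yvec i).
Proof. by exists 0 => w t; rewrite mulr0 addr0 obj_shift_y. Qed.

Lemma grad_obj_y z i : grad (obj P) z 0 (rshift n i) = 0.
Proof. by rewrite mxE; apply: derive_slope => w t; rewrite mulr0 addr0 obj_shift_y. Qed.

Lemma affine_along_Lagrangian z M i : affine_along (Lagrangian z M) (yvec i).
Proof.
have affine_along_lin (phi : 'rV[R]_(n + n) -> R) k :
    affine phi -> affine_along (fun w => k * phi w) (yvec i).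
  by move=> phi_aff; apply/affine_alongMl/affine_affine_along.
have affine_F1 m : affine (@F1 _ _ P m) by exists (xvec m), 0; exact: F1_affineE.
have affine_F2 m : affine (@F2 _ _ P m) by exists (yvec m), 0; exact: F2_affineE.
repeat apply: affine_alongB; first exact: affine_along_obj.
all: apply: affine_along_sum => m _; rewrite ?big_ord0.
- by apply: affine_along_lin; exists 0, 0 => w; rewrite dotv0l addr0.
- exact/affine_along_lin/affine_gc.
- exact/affine_along_lin.
- exact/affine_along_lin.
- exact: affine_alongD (affine_along_lin _ _ _) (affine_along_lin _ _ _).
Qed.

Lemma sum_yvec_y (Q : pred 'I_n) (a : 'I_n -> R) i :
  (\sum_(m | Q m) a m *: yvec m) 0 (rshift n i) = if Q i then a i else 0.
Proof. exact: sum_evec_coord (@rshift_inj n n). Qed.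

Lemma sum_xvec_x (Q : pred 'I_n) (a : 'I_n -> R) i :
  (\sum_(m | Q m) a m *: xvec m) 0 (lshift n i) = if Q i then a i else 0.
Proof. exact: sum_evec_coord (@lshift_inj n n). Qed.

Lemma sum_yvec_x (Q : pred 'I_n) (a : 'I_n -> R) i :
  (\sum_(m | Q m) a m *: yvec m) 0 (lshift n i) = 0.
Proof. by apply: sum_evec_coord_out => m; rewrite eq_rlshift. Qed.

Lemma sum_xvec_y (Q : pred 'I_n) (a : 'I_n -> R) i :
  (\sum_(m | Q m) a m *: xvec m) 0 (rshift n i) = 0.
Proof. by apply: sum_evec_coord_out => m; rewrite eq_lrshift. Qed.

Lemma sum_grad_g (Q : pred 'I_n.+1) (a : 'I_n.+1 -> R) z :
  \sum_(j | Q j) a j *: grad (@gc _ _ P j) z =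
  \sum_(i < n) (if Q ord0 then a ord0 else 0) *: yvec i
  + \sum_(i | Q (lift ord0 i)) - a (lift ord0 i) *: yvec i.
Proof.
rewrite big_mkcond big_ord_recl /= grad_g0 -scaler_sumr; congr (_ + _).
  by case: ifP => _; rewrite ?scale0r.
by rewrite [RHS]big_mkcond; apply: eq_bigr => i _; rewrite grad_gS scalerN scaleNr.
Qed.

Lemma sum_grad_F1 (Q : pred 'I_n) (a : 'I_n -> R) z :
  \sum_(m | Q m) a m *: grad (@F1 _ _ P m) z = \sum_(m | Q m) a m *: xvec m.
Proof. by apply: eq_bigr => m _; rewrite grad_F1. Qed.

Lemma sum_grad_F2 (Q : pred 'I_n) (a : 'I_n -> R) z :
  \sum_(m | Q m) a m *: grad (@F2 _ _ P m) z = \sum_(m | Q m) a m *: yvec m.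
Proof. by apply: eq_bigr => m _; rewrite grad_F2. Qed.

Lemma Tstat_ycoord z M i : Tstat_with z M ->
  (if J0 (P:=P) z ord0 then mu M ord0 else 0)
  - (if J0 (P:=P) z (lift ord0 i) then mu M (lift ord0 i) else 0)
  + (if a10 (P:=P) z i then sig2 M i else 0)
  + (if a00 (P:=P) z i then rho2 M i else 0) = 0.
Proof.
case=> _ [stationary _].
move/(congr1 (fun A : 'rV[R]_(n + n) => A 0 (rshift n i))): stationary.
rewrite grad_obj_y big_ord0 sum_grad_g sum_grad_F1 sum_grad_F2 big_split /=.
rewrite sum_grad_F1 sum_grad_F2 !mxE !sum_yvec_y !sum_xvec_y /=.
by case: (J0 _ _); case: (J0 _ _); case: (a10 _ _); case: (a00 _ _); lra.
Qed.

Lemma tangent_yvec z i : 0 < z 0 (rshift n i) < 1 -> J0 (P:=P) z ord0 = false ->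
  tangent P z (yvec i).
Proof.
move=> /andP[yi_gt0 yi_lt1] g0_inactive; split; first by case.
split.
  move=> j; case: (unliftP ord0 j) => [k -> | ->]; last by rewrite g0_inactive.
  rewrite /J0 gSE grad_gS dotvNl dotv_evecr evecE (inj_eq (@rshift_inj n n)).
  by case: (k =P i) => [-> /eqP | _ _]; [lra | rewrite oppr0].
split; first by move=> m _; rewrite grad_F1 dotv_evecr evecE eq_lrshift.
move=> m; rewrite grad_F2 dotv_evecr evecE (inj_eq (@rshift_inj n n)).
case: (m =P i) => [-> | _ _] //=.
by rewrite /a10 /a00 F2E (gt_eqF yi_gt0) !andbF.
Qed.

Lemma feasible_y z : feasible P z ->
  [/\ forall i, 0 <= z 0 (rshift n i), forall i, z 0 (rshift n i) <= 1
    & (n - s)%:R <= \sum_(i < n) z 0 (rshift n i)].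
Proof.
move=> [_ [g_ge0 F_cond]]; split.
- by move=> i; have [_] := F_cond i; rewrite F2E.
- by move=> i; have := g_ge0 (lift ord0 i); rewrite gSE subr_ge0.
- by have := g_ge0 ord0; rewrite g0E subr_ge0.
Qed.

Lemma interior_y_not_ND2_ND4 z M i : Tstat_with z M -> 0 < z 0 (rshift n i) < 1 ->
  ND2 z M -> ND4 z M -> False.
Proof.
move=> Tz yi_interior ND2z ND4z; have /andP[yi_gt0 yi_lt1] := yi_interior.
have := Tstat_ycoord i Tz.
have -> : J0 (P:=P) z (lift ord0 i) = false by rewrite /J0 gSE; apply/eqP; lra.
rewrite /a10 /a00 F2E (gt_eqF yi_gt0) !andbF.
case g0_active: (J0 (P:=P) z ord0).
  by have := ND2z _ g0_active; lra.
move=> _; have yvec_eq0 : yvec i = 0.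
  apply: (ND4z _ (tangent_yvec yi_interior g0_active)) => eta _.
  by rewrite hess_row_affine_along ?dotv0l //; exact: affine_along_Lagrangian.
by have := evec_neq0 R (rshift n i); rewrite yvec_eq0 eqxx.
Qed.

Lemma binary_y_not_LICQ z : (forall i, z 0 (rshift n i) = 0 \/ z 0 (rshift n i) = 1) ->
  J0 (P:=P) z ord0 -> ~ LICQ P z.
Proof.
move=> y_binary g0_active LICQz.
have [|_ [b_eq0 _]] := LICQz (fun _ => 0) (fun _ => 1) (fun _ => 0) (fun _ => -1).
  rewrite big_ord0 sum_grad_g sum_grad_F1 sum_grad_F2 g0_active; apply/rowP => k.
  case: (split_ordP k) => j ->; rewrite !mxE.
    by rewrite !sum_yvec_x sum_xvec_x; case: ifP; lra.
  rewrite !sum_yvec_y sum_xvec_y /J0 gSE /a10 /a00 F2E.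
  by case: (y_binary j) => ->; rewrite ?subr0 ?subrr eqxx ?oner_eq0 ?andbT ?andbF ?orNb /=; lra.
by have /eqP := b_eq0 ord0 g0_active; rewrite oner_eq0.
Qed.

Lemma y_one_not_ND2 z M i : Tstat_with z M -> J0 (P:=P) z ord0 = false ->
  z 0 (rshift n i) = 1 -> ~ ND2 z M.
Proof.
move=> Tz g0_inactive yi1 ND2z.
have active : J0 (P:=P) z (lift ord0 i) by rewrite /J0 gSE yi1 subrr.
have := Tstat_ycoord i Tz; rewrite g0_inactive active /a10 /a00 F2E yi1 oner_eq0 !andbF.
by have := ND2z _ active; lra.
Qed.

End Relaxation.

Theorem mainTheorem13 (R : realType) (n s : nat) (f : 'rV[R]_n -> R) :
  (s < n)%N -> C2 f ->
  forall z : 'rV[R]_(n + n),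
    T_stationary (relaxation s f) z -> degenerate (relaxation s f) z.
Proof.
move=> s_lt_n _ z Tz; split=> //.
case=> M [Tz_M [LICQz [ND2z [_ ND4z]]]].
have [y_ge0 y_le1 y_sum] := feasible_y Tz_M.1.
have [[i yi_interior] | no_interior] := pselect (exists i, 0 < z 0 (rshift n i) < 1).
  exact: interior_y_not_ND2_ND4 Tz_M yi_interior ND2z ND4z.
have y_binary i : z 0 (rshift n i) = 0 \/ z 0 (rshift n i) = 1.
  have [yi_eq0 | yi_neq0] := eqVneq (z 0 (rshift n i)) 0; first by left.
  have [yi_eq1 | yi_neq1] := eqVneq (z 0 (rshift n i)) 1; first by right.
  exfalso; apply: no_interior; exists i.
  by rewrite lt_neqAle eq_sym yi_neq0 y_ge0 lt_neqAle yi_neq1 y_le1.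
case g0_active: (J0 (P:=relaxation s f) z ord0).
  exact: binary_y_not_LICQ y_binary g0_active LICQz.
have [i yi1] : exists i, z 0 (rshift n i) = 1.
  apply: contrapT => no_one; move: y_sum.
  rewrite big1 => [|i _]; last by case: (y_binary i) => // yi1; case: no_one; exists i.
  by rewrite leNgt ltr0n subn_gt0 s_lt_n.
exact: y_one_not_ND2 Tz_M g0_active yi1 ND2z.
Qed.
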